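(* Let ${\sf Gr}^{\sf count}$ be the category of countable groups and ${\sf Gr}^{\sf f.g.}$ the category of finitely generated groups (both full subcategories of the category of groups). Any functor ${\sf Gr}^{\sf count}\to{\sf Gr}^{\sf f.g.}$ is isomorphic to a constant functor. *)

From Stdlib Require Import List.
Set Implicit Arguments.

Record Group : Type := MkGroup {
  carrier :> Type;
  gmul : carrier -> carrier -> carrier;
  gone : carrier;
  ginv : carrier -> carrier;
  gmulA : forall x y z, gmul x (gmul y z) = gmul (gmul x y) z;
  gmul1l : forall x, gmul gone x = x;
  gmul1r : forall x, gmul x gone = x;
  gmulVl : forall x, gmul (ginv x) x = gone;
  gmulVr : forall x, gmul x (ginv x) = gone
}.

Record Hom (G H : Group) : Type := MkHom {
  hfun :> G -> H;
  hmul : forall x y, hfun (gmul G x y) = gmul H (hfun x) (hfun y)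
}.

Definition hom_id (G : Group) : Hom G G :=
  @MkHom G G (fun x => x) (fun x y => eq_refl).

Definition hom_comp (G H K : Group) (g : Hom H K) (f : Hom G H) : Hom G K.
Proof.
  refine (@MkHom G K (fun x => g (f x)) _).
  intros x y; rewrite (hmul f), (hmul g); reflexivity.
Defined.

Definition is_iso (G H : Group) (f : Hom G H) : Prop :=
  exists g : Hom H G, (forall x, g (f x) = x) /\ (forall y, f (g y) = y).

Definition countable_group (G : Group) : Prop :=
  exists c : G -> nat, forall x y, c x = c y -> x = y.

Inductive generated (G : Group) (S : list (carrier G)) : carrier G -> Prop :=
  | gen_in : forall x, In x S -> generated G S x
  | gen_one : generated G S (gone G)
  | gen_inv : forall x, generated G S x -> generated G S (ginv G x)
  | gen_mul : forall x y, generated G S x -> generated G S y ->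
      generated G S (gmul G x y).

Definition finitely_generated (G : Group) : Prop :=
  exists S : list (carrier G), forall x, @generated G S x.

Record CountGroup : Type := MkCountGroup {
  cgroup :> Group;
  cgroup_countable : countable_group cgroup
}.

Record FGGroup : Type := MkFGGroup {
  fggroup :> Group;
  fggroup_fg : finitely_generated fggroup
}.

(* A functor Gr^count -> Gr^f.g.; equality of morphisms is equality of the
   underlying functions (stated pointwise). *)
Record Functor_count_fg : Type := MkFunctor {
  Fobj : CountGroup -> FGGroup;
  Fmor : forall G H : CountGroup, Hom G H -> Hom (Fobj G) (Fobj H);
  Fid : forall (G : CountGroup) x, Fmor G G (hom_id G) x = x;
  Fcomp : forall (G H K : CountGroup) (g : Hom H K) (f : Hom G H) x,
      Fmor G K (hom_comp g f) x = Fmor H K g (Fmor G H f x)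
}.

(* F is isomorphic to the constant functor with value K (all morphisms sent
   to id_K): a natural transformation eta : F => const_K whose components are
   isomorphisms. *)
Definition iso_to_constant (F : Functor_count_fg) (K : FGGroup) : Prop :=
  exists eta : forall G : CountGroup, Hom (Fobj F G) K,
    (forall G, is_iso (eta G)) /\
    (forall (G H : CountGroup) (f : Hom G H) x, eta H (Fmor F G H f x) = eta G x).

(** The key point is that every functor F : Gr^count -> Gr^f.g. sends the
    trivial endomorphism of any countable group G to the identity; then
    F(G -> 1) and F(1 -> G) are mutually inverse and natural.

    Let A be the restricted direct sum of countably many copies of G, again
    countable.  The restrictions p_S : A -> A to coordinate sets S ⊆ ℕ are
    uncountably many, whereas F(A) is finitely generated, so it has only
    countably many endomorphisms; hence F(p_S) = F(p_T) for some S ≠ T, say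
    k ∈ S \ T.  Composing with the k-th injection and projection turns p_S into
    id_G and p_T into the trivial map G -> G, so F(id_G) = F(triv_G). *)
From Stdlib Require Import List.
From Stdlib Require Import Classical ClassicalDescription IndefiniteDescription
  ProofIrrelevance FunctionalExtensionality.
From mathcomp Require Import ssreflect ssrfun ssrbool eqtype ssrnat seq choice.
Set Implicit Arguments.

Lemma hom_ext (G H : Group) (f g : Hom G H) : (forall x, f x = g x) -> f = g.
Proof.
case: f g => [f fM] [g gM] /= /functional_extensionality fg.
subst g; congr MkHom; exact: proof_irrelevance.
Qed.

Lemma gmul_idem_one (G : Group) (x : G) : gmul G x x = x -> x = gone G.
Proof.
move=> xx; have := gmulVl _ x; by rewrite -{2}xx gmulA gmulVl gmul1l.
Qed.

Lemma ginv_unique (G : Group) (a b : G) : gmul G a b = gone G -> a = ginv G b.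
Proof.
move=> ab; by rewrite -[a]gmul1r -(gmulVr _ b) gmulA ab gmul1l.
Qed.

Lemma ginv_one (G : Group) : ginv G (gone G) = gone G.
Proof. by symmetry; apply: ginv_unique; rewrite gmul1l. Qed.

Lemma hom_one (G H : Group) (f : Hom G H) : f (gone G) = gone H.
Proof. by apply: gmul_idem_one; rewrite -hmul gmul1l. Qed.

Lemma hom_inv (G H : Group) (f : Hom G H) x : f (ginv G x) = ginv H (f x).
Proof. by apply: ginv_unique; rewrite -hmul gmulVl hom_one. Qed.

Lemma hom_eq_on_generated (G H : Group) (f g : Hom G H) (S : list G) :
  (forall s, In s S -> f s = g s) -> forall x, generated G S x -> f x = g x.
Proof.
move=> fgS x; elim=> {x} [s /fgS //||x _ fgx|x y _ fgx _ fgy].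
- by rewrite !hom_one.
- by rewrite !hom_inv fgx.
- by rewrite !hmul fgx fgy.
Qed.

Lemma countable_of_surj (T : countType) (X : Type) (e : T -> X) :
  (forall x, exists t, e t = x) -> exists c : X -> nat, injective c.
Proof.
move=> e_surj; pose s x := proj1_sig (constructive_indefinite_description _ (e_surj x)).
have sK : cancel s e by move=> x; rewrite /s; case: constructive_indefinite_description.
by exists (pickle \o s); apply: inj_comp (pcan_inj (@pickleK T)) (can_inj sK).
Qed.

Section Words.
Variables (X : Group) (L : list X).

(** Group words over the generators [L]: a leaf [i] is the [i]-th generator,
    [Node 0 [w]] the inverse and [Node 1 [w1; w2]] the product. *)
Fixpoint eval_word (w : GenTree.tree nat) : X :=
  match w with
  | GenTree.Leaf i => List.nth i L (gone X)
  | GenTree.Node 0 (w1 :: nil) => ginv X (eval_word w1)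
  | GenTree.Node 1 (w1 :: w2 :: nil) => gmul X (eval_word w1) (eval_word w2)
  | _ => gone X
  end.

Lemma generated_eval_word x : generated X L x -> exists w, eval_word w = x.
Proof.
elim=> {x} [x /(In_nth L x (gone X)) [i [_ ix]]||x _ [w <-]|x y _ [w1 <-] _ [w2 <-]].
- by exists (GenTree.Leaf i).
- by exists (GenTree.Node 2 nil).
- by exists (GenTree.Node 0 (w :: nil)).
- by exists (GenTree.Node 1 (w1 :: w2 :: nil)).
Qed.

End Words.

Lemma fg_countable (X : Group) : finitely_generated X -> countable_group X.
Proof.
move=> [L genL].
have [c c_inj] := @countable_of_surj _ X (eval_word X L)
  (fun x => generated_eval_word (genL x)).
by exists c.
Qed.

Lemma countable_homs_from_fg (X Y : Group) :
  finitely_generated X -> countable_group Y ->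
  exists code : Hom X Y -> nat,
    forall f g, code f = code g -> forall x, f x = g x.
Proof.
move=> [L genL] [c c_inj].
exists (fun f => pickle (List.map (c \o f) L)) => f g /(pcan_inj (@pickleK _)).
move/map_ext_in_iff => cfg x; apply: (@hom_eq_on_generated _ _ f g L _ x (genL x)).
by move=> s /cfg /c_inj.
Qed.

Lemma cantor_collision (h : (nat -> bool) -> nat) :
  exists f g k, h f = h g /\ f k <> g k.
Proof.
apply: NNPP => no_collision.
have agree f g k : h f = h g -> f k = g k.
  by move=> hfg; apply: NNPP => fgk; apply: no_collision; exists f, g, k.
pose d n := if excluded_middle_informative (exists f, h f = n /\ f n = true)
            then false else true.
have : d (h d) = if excluded_middle_informative
                   (exists f, h f = h d /\ f (h d) = true) then false else true by [].
case: excluded_middle_informative => [[f [hf fd]]|no_f] /= dd.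
- by rewrite -(agree _ _ (h d) hf) fd in dd.
- by apply: no_f; exists d.
Qed.

Section DirectSum.
Variable G : Group.

Definition finsupp (a : nat -> G) := exists N, forall n, N <= n -> a n = gone G.

Definition dsum_car := {a : nat -> G | finsupp a}.

Lemma dsum_ext (a b : dsum_car) : (forall n, proj1_sig a n = proj1_sig b n) -> a = b.
Proof.
case: a b => [a fa] [b fb] /= /functional_extensionality ab.
subst b; congr exist; exact: proof_irrelevance.
Qed.

Lemma finsupp_mul a b : finsupp a -> finsupp b -> finsupp (fun n => gmul G (a n) (b n)).
Proof.
move=> [Na Ha] [Nb Hb]; exists (maxn Na Nb) => n; rewrite geq_max => /andP[na nb].
by rewrite Ha // Hb // gmul1l.
Qed.

Lemma finsupp_one : finsupp (fun _ => gone G).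
Proof. by exists 0. Qed.

Lemma finsupp_inv a : finsupp a -> finsupp (fun n => ginv G (a n)).
Proof. by move=> [N Ha]; exists N => n /Ha ->; rewrite ginv_one. Qed.

Definition dsum_mul (a b : dsum_car) : dsum_car :=
  exist _ _ (finsupp_mul (proj2_sig a) (proj2_sig b)).
Definition dsum_one : dsum_car := exist _ _ finsupp_one.
Definition dsum_inv (a : dsum_car) : dsum_car := exist _ _ (finsupp_inv (proj2_sig a)).

Definition dsum : Group.
Proof.
refine (@MkGroup dsum_car dsum_mul dsum_one dsum_inv _ _ _ _ _) => *;
  apply: dsum_ext => n /=.
- exact: gmulA.
- exact: gmul1l.
- exact: gmul1r.
- exact: gmulVl.
- exact: gmulVr.
Defined.

Definition dsum_bound (a : dsum) : nat :=
  proj1_sig (constructive_indefinite_description _ (proj2_sig a)).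

Lemma dsum_boundP (a : dsum) n : dsum_bound a <= n -> proj1_sig a n = gone G.
Proof. by rewrite /dsum_bound; case: constructive_indefinite_description => N /=; apply. Qed.

Lemma dsum_countable : countable_group G -> countable_group dsum.
Proof.
move=> [c c_inj].
exists (fun a => pickle [seq c (proj1_sig a n) | n <- iota 0 (dsum_bound a)]).
move=> a b /(pcan_inj (@pickleK _)) cab.
have Nab : dsum_bound a = dsum_bound b by rewrite -(size_iota 0 (dsum_bound a))
  -(size_map (fun n => c (proj1_sig a n))) cab size_map size_iota.
apply: dsum_ext => n; have [n_small|n_large] := ltnP n (dsum_bound a).
- apply: c_inj; move: cab; rewrite -Nab => /eq_in_map; apply.
  by rewrite mem_iota.
- by rewrite !dsum_boundP -?Nab.
Qed.

Lemma finsupp_in k (x : G) : finsupp (fun n => if n == k then x else gone G).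
Proof. by exists k.+1 => n; case: eqP => // ->; rewrite ltnn. Qed.

Definition dsum_in (k : nat) : Hom G dsum.
Proof.
refine (@MkHom G dsum (fun x => exist _ _ (finsupp_in k x)) _) => x y.
by apply: dsum_ext => n /=; case: (n == k); rewrite ?gmul1l.
Defined.

Definition dsum_proj (k : nat) : Hom dsum G :=
  @MkHom dsum G (fun a => proj1_sig a k) (fun _ _ => erefl).

Lemma finsupp_restrict (S : nat -> bool) a :
  finsupp a -> finsupp (fun n => if S n then a n else gone G).
Proof. by move=> [N Ha]; exists N => n /Ha ->; case: (S n). Qed.

Definition dsum_restrict (S : nat -> bool) : Hom dsum dsum.
Proof.
refine (@MkHom dsum dsum (fun a => exist _ _ (finsupp_restrict S (proj2_sig a))) _).
by move=> a b; apply: dsum_ext => n /=; case: (S n); rewrite ?gmul1l.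
Defined.

Lemma dsum_proj_restrict_in (S : nat -> bool) k x :
  dsum_proj k (dsum_restrict S (dsum_in k x)) = if S k then x else gone G.
Proof. by rewrite /= eqxx; case: (S k). Qed.

End DirectSum.

Definition dsum_cgroup (G : CountGroup) : CountGroup :=
  MkCountGroup (dsum_countable (cgroup_countable G)).

Definition triv (G H : Group) : Hom G H :=
  @MkHom G H (fun _ => gone H) (fun _ _ => esym (gmul1l H (gone H))).

Definition unit_group : Group.
Proof.
by refine (@MkGroup unit (fun _ _ => tt) tt (fun _ => tt) _ _ _ _ _) => // - [].
Defined.

Definition unit_cgroup : CountGroup.
Proof.
refine (@MkCountGroup unit_group _).
by exists (fun _ => 0) => [[] []].
Defined.

Section Functor.
Variable F : Functor_count_fg.

Lemma Fmor_ext (G H : CountGroup) (f g : Hom G H) y :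
  (forall x, f x = g x) -> Fmor F G H f y = Fmor F G H g y.
Proof. by move/hom_ext->. Qed.

Lemma Fmor_factor (G H K : CountGroup) (h : Hom G K) (g : Hom H K) (f : Hom G H) y :
  (forall x, h x = g (f x)) -> Fmor F G K h y = Fmor F H K g (Fmor F G H f y).
Proof. by move=> hgf; rewrite -Fcomp; apply: Fmor_ext. Qed.

Lemma Fmor_id_ext (G : CountGroup) (f : Hom G G) y :
  (forall x, f x = x) -> Fmor F G G f y = y.
Proof. by move=> f1; rewrite -[RHS](Fid F G y); apply: Fmor_ext. Qed.

Lemma Fmor_dsum_select (G : CountGroup) (S : nat -> bool) k x :
  Fmor F G G (if S k then hom_id G else triv G G) x =
  Fmor F (dsum_cgroup G) G (dsum_proj G k)
    (Fmor F (dsum_cgroup G) (dsum_cgroup G) (dsum_restrict G S)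
       (Fmor F G (dsum_cgroup G) (dsum_in G k) x)).
Proof.
rewrite -!Fcomp; apply: Fmor_ext => y.
by rewrite [RHS]dsum_proj_restrict_in; case: (S k).
Qed.

Lemma Fmor_triv (G : CountGroup) x : Fmor F G G (triv G G) x = x.
Proof.
pose A := dsum_cgroup G; pose FA_fg := fggroup_fg (Fobj F A).
have [code code_ok] := countable_homs_from_fg FA_fg (fg_countable FA_fg).
have [f [g [k [code_fg fgk]]]] :=
  cantor_collision (fun S => code (Fmor F A A (dsum_restrict G S))).
have F_select_fg : Fmor F G G (if f k then hom_id G else triv G G) x =
                   Fmor F G G (if g k then hom_id G else triv G G) x.
  by rewrite !Fmor_dsum_select (code_ok _ _ code_fg).
rewrite -[RHS](Fid F G x).
by case: (f k) (g k) fgk F_select_fg => [] [] // _ ->.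
Qed.

End Functor.

Theorem proposition2p9 :
  forall F : Functor_count_fg, exists K : FGGroup, iso_to_constant F K.
Proof.
move=> F; exists (Fobj F unit_cgroup).
exists (fun G => Fmor F G unit_cgroup (triv G unit_cgroup)); split.
- move=> G; exists (Fmor F unit_cgroup G (triv unit_cgroup G)); split.
  + by move=> x; rewrite -(@Fmor_factor F _ _ _ (triv G G)) // Fmor_triv.
  + by move=> y; rewrite -Fcomp; apply: Fmor_id_ext => -[].
- by move=> G H f x; rewrite -Fcomp; apply: Fmor_ext.
Qed.
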